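(* Let $\Bbbk$ be a field and let $I\subseteq \Bbbk[x,y,z]$ be a monomial ideal generated in degree $d$ which has a linear resolution. Then there is an ordering $m_1,\ldots,m_r$ of its minimal monomial generators such that $I$ has linear quotients with respect to this ordering, i.e. $(m_1,\ldots,m_{i-1}):m_i$ is generated by variables for every $i=2,\ldots,r$.
   Context: $\Bbbk[x,y,z]$ is the standard graded polynomial ring. A homogeneous ideal generated in degree $d$ has a linear resolution if its graded Betti numbers satisfy $\beta_{i,i+j}(I)=0$ for all $i\geq 0$ and $j\neq d$. *)

From HB Require Import structures.
From mathcomp Require Import all_boot all_order all_algebra.
From mathcomp Require Import mpoly.
Set Implicit Arguments. Unset Strict Implicit. Unset Printing Implicit Defensive.
Import Order.TTheory GRing.Theory.
Local Open Scope ring_scope.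

Section Defs.
Variables (F : fieldType) (n : nat).

Definition in_ideal (gs : seq {mpoly F[n]}) (f : {mpoly F[n]}) : Prop :=
  exists c : 'I_(size gs) -> {mpoly F[n]}, f = \sum_(k < size gs) c k * gs`_k.

Definition monp (m : 'X_{1..n}) : {mpoly F[n]} := 'X_[m].

Definition colon_gen_by_vars (prev : seq 'X_{1..n}) (m : 'X_{1..n}) : Prop :=
  exists S : {set 'I_n}, forall f : {mpoly F[n]},
    in_ideal [seq monp u | u <- prev] (f * monp m) <->
    in_ideal [seq monp (mnm1 j) | j <- enum S] f.

(* I has linear quotients w.r.t. the ordering ms = m_1,...,m_r
   (indices in Rocq are 0-based: for i = 1..r-1, (ms_0..ms_{i-1}) : ms_i) *)
Definition linear_quotients (ms : seq 'X_{1..n}) : Prop :=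
  forall i, (0 < i < size ms)%N -> colon_gen_by_vars (take i ms) (nth 0%MM ms i).

Definition mdivb (m1 m2 : 'X_{1..n}) : bool := [forall j, (m1 j <= m2 j)%N].

Definition mon_in (G : seq 'X_{1..n}) (m : 'X_{1..n}) : bool :=
  has (fun g => mdivb g m) G.

Definition mnm_set (S : {set 'I_n}) : 'X_{1..n} := [multinom (j \in S : nat) | j < n].

(* In multidegree b, the Koszul complex K(x_0..x_{n-1}) (x) I has basis the
   e_S (S a set of variables) with x^(b - 1_S) in I (and b >= 1_S);
   e_S sits in homological degree #|S|. *)
Definition kvalid (G : seq 'X_{1..n}) (b : 'X_{1..n}) (S : {set 'I_n}) : bool :=
  mdivb (mnm_set S) b && mon_in G (mnm_sub b (mnm_set S)).

Let N := #|{set 'I_n}|.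

Definition kproj (G : seq 'X_{1..n}) (b : 'X_{1..n}) (i : nat) : 'M[F]_N :=
  \matrix_(p < N, q < N)
    (if (p == q) && kvalid G b (enum_val p) && (#|enum_val p| == i)%N
     then 1 else 0).

(* Koszul differential (row-vector convention):
   (x^(b-1_S)) e_S  |->  sum_{j in S} (-1)^{#{k in S, k < j}} (x^(b-1_S) x_j) e_{S \ j} *)
Definition kdiff (G : seq 'X_{1..n}) (b : 'X_{1..n}) : 'M[F]_N :=
  \matrix_(p < N, q < N)
    (let S := enum_val p in let T := enum_val q in
     if kvalid G b S then
       \sum_(j in S | T == S :\ j) (-1) ^+ #|[set k in S | (k < j)%N]|
     else 0).

(* multigraded Betti number  beta_{i,b}(I) = dim_k Tor_i(I, k)_b
   = dim_k H_i(K(x) (x) I)_b  (Koszul homology), where I is the monomial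
   ideal generated by G *)
Definition betti_mdeg (G : seq 'X_{1..n}) (i : nat) (b : 'X_{1..n}) : nat :=
  (\rank (kproj G b i) - \rank (kproj G b i *m kdiff G b)
     - \rank (kproj G b i.+1 *m kdiff G b))%N.

(* I has a d-linear resolution: beta_{i,j}(I) = sum_{|b| = j} beta_{i,b}(I) = 0
   whenever j <> i + d *)
Definition linear_resolution (G : seq 'X_{1..n}) (d : nat) : Prop :=
  forall (i : nat) (b : 'X_{1..n}), mdeg b <> (i + d)%N -> betti_mdeg G i b = 0%N.

End Defs.

From HB Require Import structures.
From mathcomp Require Import all_boot all_order all_algebra.
From mathcomp Require Import mpoly.
From mathcomp Require Import zify ring.
Set Implicit Arguments. Unset Strict Implicit. Unset Printing Implicit Defensive.
Import Order.TTheory GRing.Theory.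

(* Both Betti conditions are read off the Koszul complex of I in a single multidegree b,
   whose basis vectors are the e_S (S a set of variables) with x^(b - 1_S) in I.
   In multidegree c x y z, beta_2 = 0 says that I is saturated from degree d on: if
   deg c >= d and x c, y c, z c all lie in I, then so does c. In multidegrees of degree
   at least d + 2, beta_1 = 0 forces the generators dividing b to form a connected graph
   under the moves u -> u x_l / x_s. Connectedness alone makes (I without u) : u
   generated by variables for every generator u. If moreover u is lexicographically
   largest (comparing y and z in a suitable order), saturation shows that removing u
   preserves both properties, so removing generators one at a time and reversing the
   order of removal gives linear quotients. *)

Section Monomials.
Variable n : nat.
Implicit Types (a b c g h u v w : 'X_{1..n}) (G H : seq 'X_{1..n}).

Lemma mdivbP a b : reflect (forall i, a i <= b i) (mdivb a b).
Proof. exact: forallP. Qed.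

Lemma mdivb_trans : transitive (@mdivb n).
Proof.
by move=> b a c /mdivbP ab /mdivbP bc; apply/mdivbP => i; apply: leq_trans (ab i) (bc i).
Qed.

Lemma mdivb_mdeg_eq a b : mdivb a b -> mdeg a = mdeg b -> a = b.
Proof.
move=> ab /eqP; rewrite -(submK ab) mdegD -{1}[mdeg a]add0n eqn_add2r eq_sym mdeg_eq0.
by move=> /eqP ->; rewrite add0m.
Qed.

Lemma mdeg_mdivb a b : mdivb a b -> mdeg a <= mdeg b.
Proof. by move=> ab; rewrite -(submK ab) mdegD leq_addl. Qed.

Lemma mdivb_mdegS a b : mdivb a b -> mdeg b = (mdeg a).+1 -> exists s, (a + U_(s))%MM = b.
Proof.
move=> ab; rewrite -{1}(submK ab) mdegD addnC -addn1 => /addnI /eqP /mdeg1P [s /eqP sE].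
by exists s; rewrite -sE addmC submK.
Qed.

Lemma mdivb_mdeg_ltn a b : mdivb a b -> mdeg a < mdeg b -> exists j, a j < b j.
Proof.
move=> /mdivbP ab; case: (pickP (fun j => a j < b j)) => [j lt _| ge]; first by exists j.
suff -> : a = b by rewrite ltnn.
by apply/mnmP => i; have := ge i; have := ab i; lia.
Qed.

Lemma mdivb_subU a b j : 0 < b j -> mdivb a (b - U_(j))%MM = mdivb a b && (a j < b j).
Proof.
move=> bj; apply/mdivbP/andP => [ab | [/mdivbP ab aj] i].
  split; first by apply/mdivbP => i; apply: leq_trans (ab i) _; rewrite mnmBE leq_subr.
  by have := ab j; rewrite mnmBE mnm1E eqxx; lia.
by rewrite mnmBE mnm1E; case: eqP => [<-|_]; [lia | rewrite subn0].
Qed.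

Lemma mdeg_subU b j : 0 < b j -> (mdeg (b - U_(j))%MM).+1 = mdeg b.
Proof.
move=> bj; have jb : (U_(j) <= b)%MM by apply/forallP => i; rewrite mnm1E; case: eqP => [<-|].
by rewrite -{2}(submK jb) mdegD mdeg1 addn1.
Qed.

Lemma mon_inP G c : reflect (exists2 g, g \in G & mdivb g c) (mon_in G c).
Proof. exact: hasP. Qed.

Lemma mon_in_mem G g : g \in G -> mon_in G g.
Proof. by move=> gG; apply/mon_inP; exists g => //; apply/mdivbP. Qed.

Lemma mon_in_mdivb G a b : mon_in G a -> mdivb a b -> mon_in G b.
Proof. by move=> /mon_inP [g gG ga] ab; apply/mon_inP; exists g => //; apply: mdivb_trans ab. Qed.

Lemma mon_in_sub G H c : {subset G <= H} -> mon_in G c -> mon_in H c.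
Proof. by move=> GH /mon_inP [g /GH gH gc]; apply/mon_inP; exists g. Qed.

Definition adjacent u w := exists l s, l != s /\ (w + U_(s) = u + U_(l))%MM.

Lemma adjacent_sym u w : adjacent u w -> adjacent w u.
Proof. by case=> l [s [nls E]]; exists s, l; rewrite eq_sym E. Qed.

Lemma adjacent_neq u w : adjacent u w -> w != u.
Proof.
case=> l [s [nls E]]; apply/eqP => wu; move: E; rewrite wu => /addmI /mnmP /(_ s).
by rewrite !mnm1E eqxx (negbTE nls).
Qed.

Lemma adjacent_of_mdivb d g h b : mdeg g = d -> mdeg h = d -> mdeg b <= d.+1 ->
  mdivb g b -> mdivb h b -> g != h -> adjacent g h.
Proof.
move=> dg dh db gb hb ngh; have [ltb | geb] := ltnP (mdeg b) d.+1.
  have gE : g = b by apply: mdivb_mdeg_eq => //; have := mdeg_mdivb gb; lia.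
  have hE : h = b by apply: mdivb_mdeg_eq => //; have := mdeg_mdivb hb; lia.
  by rewrite gE hE eqxx in ngh.
have bE : mdeg b = d.+1 by lia.
have [s gs] : exists s, (g + U_(s))%MM = b by apply: mdivb_mdegS; rewrite // bE dg.
have [l hl] : exists l, (h + U_(l))%MM = b by apply: mdivb_mdegS; rewrite // bE dh.
exists s, l; split; last by rewrite hl gs.
apply: contra ngh => /eqP sl; apply/eqP/(@addmI _ U_(s)%MM).
by rewrite addmC gs sl addmC hl.
Qed.

Definition connected_at G b := forall P : 'X_{1..n} -> Prop,
  (exists g, [/\ g \in G, mdivb g b & P g]) ->
  (forall x y, x \in G -> y \in G -> mdivb x b -> mdivb y b -> adjacent x y -> P x -> P y) ->
  forall g, g \in G -> mdivb g b -> P g.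

Definition divisor_graph_connected G := forall b, connected_at G b.

Lemma connected_at_small G d b :
  (forall g, g \in G -> mdeg g = d) -> mdeg b <= d.+1 -> connected_at G b.
Proof.
move=> Gd db P [g0 [g0G g0b Pg0]] hP g gG gb; have [<- // | ng] := eqVneq g0 g.
by apply: (hP g0 g) => //; apply: (adjacent_of_mdivb (Gd _ g0G) (Gd _ gG) db).
Qed.

Definition mon_colon_by_vars G u :=
  forall v, v \in G -> exists l, u l < v l /\ mon_in G (u + U_(l))%MM.

Lemma eq_mon_colon_by_vars G H u : G =i H -> mon_colon_by_vars H u -> mon_colon_by_vars G u.
Proof.
move=> GH colH v; rewrite GH => /colH [l [ul Hul]]; exists l; split => //.
by rewrite /mon_in (eq_has_r GH).
Qed.

Lemma connected_colon_by_vars G u : uniq G -> divisor_graph_connected G -> u \in G ->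
  mon_colon_by_vars (rem u G) u.
Proof.
move=> uG CG uin v; rewrite mem_rem_uniq // inE => /andP [nvu vG].
pose b := mlcm u v.
have [ub vb] : mdivb u b /\ mdivb v b by split; [apply: lem_mlcml | apply: lem_mlcmr].
have [vu | [w [wG wb [l [s [nls E]]]]]] :
    v = u \/ exists w, [/\ w \in G, mdivb w b & adjacent u w].
  apply: (CG b (fun x => x = u \/ _)) => //; first by exists u; split => //; left.
  move=> x y _ yG _ yb axy [xu | ?]; right => //.
  by exists y; split => //; rewrite -xu.
by rewrite vu eqxx in nvu.
exists l; split.
  move/mdivbP: wb => /(_ l); rewrite mnmE.
  have := congr1 (fun m : 'X_{1..n} => m l) E; rewrite /= !mnmDE !mnm1E eqxx eq_sym (negbTE nls).
  lia.
apply/mon_inP; exists w.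
  by rewrite mem_rem_uniq // inE wG andbT; apply: adjacent_neq; exists l, s.
by rewrite -E; apply: lem_addr.
Qed.

Definition saturated_from G d :=
  forall c, d <= mdeg c -> (forall l, mon_in G (c + U_(l))%MM) -> mon_in G c.

Lemma saturated_rem G d u p : uniq G -> (forall g, g \in G -> g p <= u p) ->
  saturated_from G d -> saturated_from (rem u G) d.
Proof.
move=> uG pmax satG c dc Hc.
have memR x : (x \in rem u G) = (x != u) && (x \in G) by rewrite mem_rem_uniq // inE.
have /mon_inP [g gG gc] := satG c dc (fun l => mon_in_sub (@mem_rem _ u G) (Hc l)).
have [gu | gnu] := eqVneq g u; last by apply/mon_inP; exists g; rewrite // memR gnu.
have /mon_inP [h] := Hc p; rewrite memR => /andP [hnu hG] /mdivbP hc.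
apply/mon_inP; exists h; rewrite ?memR ?hnu //; apply/mdivbP => i.
have := hc i; rewrite mnmDE mnm1E; case: eqVneq => [<- | _]; last by rewrite addn0.
move/mdivbP: gc => /(_ p); rewrite gu; have := pmax h hG; lia.
Qed.

Definition mon_linear_quotients (ms : seq 'X_{1..n}) :=
  forall i, 0 < i < size ms -> mon_colon_by_vars (take i ms) (nth 0%MM ms i).

Lemma mon_linear_quotients_by_removal (Q : seq 'X_{1..n} -> Prop) :
  (forall G, uniq G -> Q G -> G != [::] ->
     exists2 u, u \in G & Q (rem u G) /\ mon_colon_by_vars (rem u G) u) ->
  forall G, uniq G -> Q G -> exists2 ms, perm_eq ms G & mon_linear_quotients ms.
Proof.
move=> step G; have [k] := ubnP (size G); elim: k G => // k IH G /ltnSE sGk uG QG.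
have [-> | GN] := eqVneq G [::]; first by exists [::] => // i; rewrite ltn0 andbF.
have [u uin [Qu colu]] := step G uG QG GN.
have [|ms pms lqms] := IH (rem u G) _ (rem_uniq u uG) Qu.
  by rewrite size_rem //; apply: leq_trans sGk; rewrite ltn_predL lt0n size_eq0.
exists (rcons ms u).
  by rewrite perm_rcons perm_sym (perm_trans (perm_to_rem uin)) // perm_cons perm_sym.
move=> i; rewrite size_rcons ltnS -cats1 => /andP [i0].
rewrite leq_eqVlt => /orP [/eqP -> | ilt].
  rewrite take_size_cat // nth_cat ltnn subnn /=.
  by apply: eq_mon_colon_by_vars colu; apply: perm_mem.
by rewrite takel_cat ?(ltnW ilt) // nth_cat ilt; apply: lqms; rewrite i0.
Qed.

End Monomials.

Section Ideals.
Variables (F : fieldType) (n : nat).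
Local Open Scope ring_scope.
Implicit Types (gs : seq {mpoly F[n]}) (f g h : {mpoly F[n]}) (P : seq 'X_{1..n}).

Lemma in_ideal0 gs : in_ideal gs 0.
Proof. by exists (fun _ => 0); rewrite big1 // => k _; rewrite mul0r. Qed.

Lemma in_idealD gs f g : in_ideal gs f -> in_ideal gs g -> in_ideal gs (f + g).
Proof.
move=> [c1 ->] [c2 ->]; exists (fun k => c1 k + c2 k).
by rewrite -big_split; apply: eq_bigr => k _; rewrite mulrDl.
Qed.

Lemma in_idealMl gs h f : in_ideal gs f -> in_ideal gs (h * f).
Proof.
move=> [c ->]; exists (fun k => h * c k).
by rewrite mulr_sumr; apply: eq_bigr => k _; rewrite mulrA.
Qed.

Lemma in_ideal_sum gs (I : Type) (r : seq I) (fs : I -> {mpoly F[n]}) :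
  (forall i, in_ideal gs (fs i)) -> in_ideal gs (\sum_(i <- r) fs i).
Proof. by move=> H; apply: big_ind => //; [apply: in_ideal0 | apply: in_idealD]. Qed.

Lemma in_ideal_mem gs g : g \in gs -> in_ideal gs g.
Proof.
move=> ggs; have ks : (index g gs < size gs)%N by rewrite index_mem.
exists (fun k => ((k : nat) == index g gs)%:R).
rewrite (bigD1 (Ordinal ks)) //= eqxx mul1r nth_index // big1 ?addr0 // => k nk.
rewrite (_ : (k == _ :> nat) = false) ?mul0r //.
by apply: contraNF nk => /eqP kE; apply/eqP/val_inj.
Qed.

Lemma in_ideal_monp P a : mon_in P a -> in_ideal [seq monp F u | u <- P] (monp F a).
Proof.
move=> /mon_inP [g gP ga].
have -> : monp F a = monp F (a - g) * monp F g by rewrite /monp -mpolyXD submK.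
by apply/in_idealMl/in_ideal_mem/map_f.
Qed.

Lemma mon_in_msupp P f a :
  in_ideal [seq monp F u | u <- P] f -> a \in msupp f -> mon_in P a.
Proof.
move=> [c ->]; apply: contraLR => Pa; rewrite mcoeff_msupp negbK raddf_sum big1 // => k _.
have kP : (k < size P)%N by rewrite -(size_map (@monp F n)) ltn_ord.
apply/eqP/negbNE; rewrite -mcoeff_msupp (nth_map 0%MM) // (perm_mem (msuppMX _ _)).
apply: contra Pa => /mapP [m _ ->]; apply/mon_inP; exists (nth 0%MM P k).
  exact: mem_nth.
exact: lem_addr.
Qed.

Lemma colon_gen_by_varsP P u : mon_colon_by_vars P u -> colon_gen_by_vars F P u.
Proof.
move=> colPu; exists [set l | mon_in P (u + U_(l))%MM] => f; split => [Pfu | [c ->]].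
  rewrite (mpolyE f) big_seq; apply: big_ind => [|g h|a af].
  - exact: in_ideal0.
  - exact: in_idealD.
  - have /mon_inP [g gP gua] : mon_in P (u + a)%MM.
      by apply: mon_in_msupp Pfu _; rewrite /monp (perm_mem (msuppMX f u)) map_f.
    have [l [ul lS]] := colPu g gP.
    have la : (U_(l) <= a)%MM.
      apply/forallP => i; rewrite mnm1E; case: eqP => [<- | //].
      by move/mdivbP: gua => /(_ l); rewrite mnmDE; lia.
    rewrite -(submK la) mpolyXD scalerAl; apply/in_idealMl/in_ideal_mem.
    by apply: (map_f (fun j => monp F U_(j)%MM)); rewrite mem_enum inE.
rewrite mulr_suml; apply: in_ideal_sum => k; rewrite -mulrA; apply: in_idealMl.
have /mapP [j jS ->] := mem_nth 0 (ltn_ord k).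
by rewrite /monp -mpolyXD addmC; apply: in_ideal_monp; rewrite mem_enum inE in jS.
Qed.

Lemma linear_quotients_mon (ms : seq 'X_{1..n}) : mon_linear_quotients ms -> linear_quotients F ms.
Proof. by move=> lq i /lq /colon_gen_by_varsP. Qed.

End Ideals.

Section KoszulCells.
Variable n : nat.
Implicit Types (G : seq 'X_{1..n}) (b c : 'X_{1..n}) (S T : {set 'I_n}).

Lemma kvalidE G b S :
  kvalid G b S = has (fun g => mdivb g b && [forall i in S, g i < b i]) G.
Proof.
apply/andP/hasP => [[/mdivbP SB /mon_inP [g gG /mdivbP gb]] |
                    [g gG /andP [/mdivbP gb /forall_inP gS]]].
  exists g => //; apply/andP; split; [apply/mdivbP | apply/forall_inP] => i;
    have := gb i; have := SB i; rewrite mnmBE mnmE; case: (i \in S) => /=; lia.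
split; first by apply/mdivbP => i; rewrite mnmE; case: (boolP (i \in S)) => [/gS | _] /=; lia.
apply/mon_inP; exists g => //; apply/mdivbP => i; rewrite mnmBE mnmE.
by have := gb i; case: (boolP (i \in S)) => [/gS | _] /=; lia.
Qed.

Lemma kvalidS G b S T : S \subset T -> kvalid G b T -> kvalid G b S.
Proof.
rewrite !kvalidE => /subsetP ST /hasP [g gG /andP [gb /forall_inP gT]].
by apply/hasP; exists g; rewrite // gb; apply/forall_inP => i /ST /gT.
Qed.

Lemma kvalid1P G b j :
  reflect (exists2 g, g \in G & mdivb g b && (g j < b j)) (kvalid G b [set j]).
Proof.
rewrite kvalidE; apply: (iffP hasP) => -[g gG /andP [gb gj]]; exists g; rewrite // gb /=.
  by have /forall_inP := gj; apply; rewrite inE.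
by apply/forall_inP => i; rewrite inE => /eqP ->.
Qed.

Lemma kvalid2_exists G b j k : kvalid G b [set j; k] ->
  exists2 g, g \in G & [&& mdivb g b, g j < b j & g k < b k].
Proof.
rewrite kvalidE => /hasP [g gG /andP [gb /forall_inP gjk]]; exists g; rewrite // gb.
by rewrite !gjk // !inE eqxx ?orbT.
Qed.

Lemma kvalid_mon_in G b c S : (forall i, b i = c i + (i \in S)) -> kvalid G b S = mon_in G c.
Proof.
move=> bE; rewrite /kvalid (_ : mdivb _ _); last by apply/mdivbP => i; rewrite mnmE bE leq_addl.
by congr (mon_in G _); apply/mnmP => i; rewrite mnmBE mnmE bE addnK.
Qed.

Lemma kvalid_setC1 G c l :
  kvalid G (c + mnm_set setT) [set~ l] = mon_in G (c + U_(l))%MM.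
Proof.
apply: kvalid_mon_in => i; rewrite !mnmDE mnmE mnm1E !inE -addnA eq_sym.
by case: (i == l).
Qed.

Lemma kvalid_setT G c : kvalid G (c + mnm_set setT) setT = mon_in G c.
Proof. by apply: kvalid_mon_in => i; rewrite mnmDE mnmE in_setT. Qed.

Definition koszul_cells G b k := [set S | kvalid G b S & #|S| == k].

End KoszulCells.

Section Rank.
Variable F : fieldType.
Local Open Scope ring_scope.

Lemma mxrank_le_rows m k (A : 'M[F]_(m, k)) (s : seq 'I_m) :
  uniq s -> (forall i j, i \notin s -> A i j = 0) -> (\rank A <= size s)%N.
Proof.
move=> us Az; pose f := tnth (in_tuple s); have finj : injective f by apply/tuple_uniqP.
suff -> : A = colsub f 1%:M *m rowsub f A.
  exact: leq_trans (mxrankM_maxl _ _) (rank_leq_col _).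
apply/matrixP => i j; rewrite !mxE; have [/tnthP [t ->] | nis] := boolP (i \in in_tuple s).
  rewrite (bigD1 t) //= !mxE eqxx mul1r big1 ?addr0 // => t' nt'.
  by rewrite !mxE (inj_eq finj) eq_sym (negbTE nt') mul0r.
rewrite Az // big1 // => t _; rewrite !mxE.
by rewrite (_ : (i == f t) = false) ?mul0r //; apply: contraNF nis => /eqP ->; apply: mem_tnth.
Qed.

Lemma mxrank_ge_unit_block m (A : 'M[F]_m) (s : seq 'I_m) :
  uniq s -> (forall i j, i \in s -> j \in s -> A i j = (i == j)%:R) -> (size s <= \rank A)%N.
Proof.
move=> us As; pose f := tnth (in_tuple s); have finj : injective f by apply/tuple_uniqP.
have subA : colsub f (rowsub f A) = 1%:M.
  by apply/matrixP => i j; rewrite !mxE As ?mem_tnth // (inj_eq finj).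
rewrite -{1}(mxrank1 F (size s)) -subA -[rowsub f A]mulmx1 -mulmx_colsub.
exact: leq_trans (mxrankM_maxl _ _) (mxrankS (rowsub_sub _ _)).
Qed.

End Rank.

Section KoszulRanks.
Variables (F : fieldType) (n : nat).
Local Open Scope ring_scope.
Implicit Types (G : seq 'X_{1..n}) (b : 'X_{1..n}).

Lemma kprojE G b k p q :
  kproj F G b k p q = ((p == q) && (enum_val p \in koszul_cells G b k))%:R.
Proof. by rewrite mxE inE andbA; case: ifP. Qed.

Lemma kprojM G b k (A : 'M[F]_#|{set 'I_n}|) p q :
  (kproj F G b k *m A) p q = if enum_val p \in koszul_cells G b k then A p q else 0.
Proof.
rewrite mxE (bigD1 p) //= kprojE eqxx big1 ?addr0 => [|r /negbTE rp].
  by case: ifP; rewrite ?mul1r ?mul0r.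
by rewrite kprojE eq_sym rp mul0r.
Qed.

Lemma mxrank_kproj G b k : \rank (kproj F G b k) = #|koszul_cells G b k|.
Proof.
set C := koszul_cells G b k; pose s := [seq enum_rank X | X <- enum C].
have us : uniq s by rewrite map_inj_uniq ?enum_uniq //; apply: enum_rank_inj.
have memS p : (p \in s) = (enum_val p \in C).
  by rewrite -{1}(enum_valK p) mem_map ?mem_enum //; apply: enum_rank_inj.
have sC : size s = #|C| by rewrite size_map cardE.
apply/eqP; rewrite eqn_leq -sC; apply/andP; split.
  by apply: mxrank_le_rows => // p q; rewrite kprojE memS => /negbTE ->; rewrite andbF.
by apply: mxrank_ge_unit_block => // p q; rewrite kprojE !memS => ->; rewrite andbT.
Qed.

Lemma mxrank_kdiff1 G b : (\rank (kproj F G b 1 *m kdiff F G b) <= 1)%N.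
Proof.
rewrite -mxrank_tr; apply: (mxrank_le_rows (s := [:: enum_rank set0])) => // q p nq.
rewrite mxE kprojM inE; case: ifP => // /andP [_ /cards1P [x Ex]].
rewrite mxE /=; case: ifP => // _; apply: big1 => j /andP [jS /eqP qE]; exfalso.
move: jS qE nq; rewrite Ex inE => /eqP -> qE.
by rewrite -(enum_valK q) qE setDv inE eqxx.
Qed.

Lemma row_kdiff_pair G b (i j : 'I_n) : (i < j)%N -> kvalid G b [set i; j] ->
  row (enum_rank [set i; j]) (kdiff F G b) =
  delta_mx 0 (enum_rank [set j]) - delta_mx 0 (enum_rank [set i]).
Proof.
move=> ij vij; have nij : i != j by rewrite neq_ltn ij.
have rankE k S : (k == enum_rank S) = (enum_val k == S).
  by rewrite -{1}(enum_valK k) (inj_eq enum_rank_inj).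
apply/rowP => k; rewrite !mxE /= enum_rankK vij !rankE big_mkcondr /= big_setU1 ?inE //=.
rewrite big_set1.
have -> : [set i; j] :\ i = [set j] by rewrite setU1K // inE.
have -> : [set i; j] :\ j = [set i] by rewrite setUC setU1K // inE eq_sym.
have -> : [set k in [set i; j] | (k < i)%N] = set0.
  apply/setP => k'; rewrite !inE; case: eqVneq => [-> | _]; first by rewrite ltnn.
  by case: eqVneq => [-> | _] //=; rewrite ltnNge (ltnW ij).
have -> : [set k in [set i; j] | (k < j)%N] = [set i].
  apply/setP => k'; rewrite !inE; case: eqVneq => [-> | _] /=; first by rewrite ij.
  by case: eqVneq => [-> | _] /=; rewrite ?ltnn.
rewrite cards0 cards1 expr0 expr1.
by case: (_ == [set j]); case: (_ == [set i]);
  rewrite /= ?mulr1n ?mulr0n ?addr0 ?add0r ?subr0 ?sub0r ?oppr0.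
Qed.

Lemma delta_kproj G b k S : S \in koszul_cells G b k ->
  delta_mx 0 (enum_rank S) *m kproj F G b k = delta_mx 0 (enum_rank S) :> 'rV[F]__.
Proof.
move=> SC; rewrite -rowE; apply/rowP => q.
by rewrite [LHS]mxE kprojE mxE enum_rankK SC andbT eq_sym.
Qed.

Lemma card_kvalid1_le G b : (#|[set i | kvalid G b [set i]]| <= #|koszul_cells G b 1|)%N.
Proof.
rewrite -(card_imset _ set1_inj); apply/subset_leq_card/subsetP => _ /imsetP [i iV ->].
by rewrite inE in iV; rewrite inE iV cards1.
Qed.

Lemma betti1_ge G b :
  (#|koszul_cells G b 1| - 1 - #|koszul_cells G b 2| <= betti_mdeg F G 1 b)%N.
Proof.
rewrite /betti_mdeg mxrank_kproj.
have := mxrankM_maxl (kproj F G b 2) (kdiff F G b); rewrite mxrank_kproj.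
have := mxrank_kdiff1 G b; lia.
Qed.

Lemma betti2_neq0_of_cycle G b (x : 'rV[F]_#|{set 'I_n}|) : x != 0 ->
  x *m kproj F G b 2 = x -> x *m kdiff F G b = 0 -> koszul_cells G b 3 = set0 ->
  betti_mdeg F G 2 b != 0%N.
Proof.
move=> x0 xP xD C3.
have xK : (x <= kproj F G b 2 :&: kermx (kdiff F G b))%MS.
  by rewrite sub_capmx -{1}xP submxMl sub_kermx xD eqxx.
have ker : (0 < \rank (kproj F G b 2 :&: kermx (kdiff F G b)))%N.
  by rewrite lt0n mxrank_eq0; apply: contraNneq x0 => capE; move: xK; rewrite capE submx0.
have := mxrankM_maxl (kproj F G b 3) (kdiff F G b); rewrite mxrank_kproj C3 cards0.
have := mxrank_mul_ker (kproj F G b 2) (kdiff F G b); rewrite /betti_mdeg; lia.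
Qed.

End KoszulRanks.

Notation mon := 'X_{1..3}.

Definition o0 : 'I_3 := @Ordinal 3 0 isT.
Definition o1 : 'I_3 := @Ordinal 3 1 isT.
Definition o2 : 'I_3 := @Ordinal 3 2 isT.

Lemma ord3_ind (P : 'I_3 -> Prop) : P o0 -> P o1 -> P o2 -> forall i, P i.
Proof.
move=> P0 P1 P2 [[|[|[|k]]] hk] //.
- by rewrite (_ : Ordinal hk = o0) //; apply: val_inj.
- by rewrite (_ : Ordinal hk = o1) //; apply: val_inj.
- by rewrite (_ : Ordinal hk = o2) //; apply: val_inj.
Qed.

Section DistinctTriple.
Variables p q r : 'I_3.
Hypotheses (npq : p != q) (nqr : q != r) (npr : p != r).

Lemma ord3_cases i : [\/ i = p, i = q | i = r].
Proof.
move: npq nqr npr; elim/ord3_ind: p; elim/ord3_ind: q; elim/ord3_ind: r => // _ _ _;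
  elim/ord3_ind: i; first [by constructor 1 | by constructor 2 | by constructor 3].
Qed.

Lemma triple_neq : ((p == q) = false) * ((q == p) = false) * ((q == r) = false) *
  ((r == q) = false) * ((p == r) = false) * ((r == p) = false).
Proof. by do !split; apply/negbTE; rewrite // eq_sym. Qed.

Lemma mdeg3 (a : mon) : mdeg a = a p + a q + a r.
Proof.
rewrite mdegE (bigD1 p) // (bigD1 q) 1?eq_sym //= (bigD1 r) /=;
  last by rewrite !(eq_sym r) npr nqr.
rewrite big1 ?addn0 ?addnA // => i.
by case: (ord3_cases i) => ->; rewrite eqxx /= ?andbF.
Qed.

Lemma mdivb3 (a b : mon) : mdivb a b = [&& a p <= b p, a q <= b q & a r <= b r].
Proof.
apply/mdivbP/and3P => [ab | [abp abq abr] i]; first by split; apply: ab.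
by case: (ord3_cases i) => ->.
Qed.

Lemma mnm3_eq (a b : mon) : a p = b p -> a q = b q -> a r = b r -> a = b.
Proof. by move=> ep eq er; apply/mnmP => i; case: (ord3_cases i) => ->. Qed.

Lemma setC1_pair : [set~ r] = [set p; q].
Proof.
by apply/setP => i; rewrite !inE; case: (ord3_cases i) => ->; rewrite ?eqxx ?triple_neq.
Qed.

Lemma card2_cases (S : {set 'I_3}) :
  #|S| = 2 -> [\/ S = [set p; q], S = [set p; r] | S = [set q; r]].
Proof.
move=> cS; have /cards1P [m Em] : #|~: S| == 1.
  by have := cardsC S; rewrite card_ord cS => /eqP; rewrite -{1}[3]/(2 + 1) eqn_add2l.
have -> : S = ~: [set m] by rewrite -Em setCK.
case: (ord3_cases m) => ->; [constructor 3 | constructor 2 | constructor 1];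
  by apply/setP => x; rewrite !inE; case: (ord3_cases x) => ->; rewrite ?eqxx ?triple_neq.
Qed.

Local Ltac mnm3_simpl := rewrite /= ?mnmDE ?mnmBE ?mnm1E ?mnmE ?eqxx ?triple_neq /=.

Local Ltac coords E :=
  move: (congr1 (fun m : mon => m p) E) (congr1 (fun m : mon => m q) E)
        (congr1 (fun m : mon => m r) E); mnm3_simpl; clear E => ? ? ?.

(* The monomials c k = u x_r^k / x_p lie in I for 1 <= k <= u_q - z_q + 1: for the largest
   k because z divides c k, and then from k + 1 down to k by saturation, as c k x_p, c k x_q
   and c k x_r are multiples of u, of a and of c (k + 1). Finally c 1 has degree d, so it is
   a generator. *)
Lemma saturated_exchange (G : seq mon) d u a z :
  (forall g, g \in G -> mdeg g = d) -> saturated_from G d ->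
  u \in G -> a \in G -> z \in G -> (a + U_(p) = u + U_(q))%MM ->
  (z p).+1 = u p -> z q <= u q -> exists2 m, m \in G & (m + U_(p) = u + U_(r))%MM.
Proof.
move=> Gd satG uG aG zG Ea zp zq.
pose c k : mon := [multinom u i + (i == r) * k - (i == p) | i < 3].
have := Gd u uG; have := Gd z zG; rewrite !mdeg3 => dz du; coords Ea.
pose K := (u q - z q).+1.
have cK j : j < K -> mon_in G (c (K - j)).
  elim: j => [_ | j IH ltjK].
    apply/mon_inP; exists z => //; rewrite mdivb3 /c; mnm3_simpl; apply/and3P; split; lia.
  apply: satG => [|l]; first by rewrite mdeg3 /c; mnm3_simpl; lia.
  case: (ord3_cases l) => ->.
  - apply: mon_in_mdivb (mon_in_mem uG) _.
    by rewrite mdivb3 /c; mnm3_simpl; apply/and3P; split; lia.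
  - apply: mon_in_mdivb (mon_in_mem aG) _.
    by rewrite mdivb3 /c; mnm3_simpl; apply/and3P; split; lia.
  - apply: mon_in_mdivb (IH _) _; first lia.
    by rewrite mdivb3 /c; mnm3_simpl; apply/and3P; split; lia.
have /mon_inP [g gG gc] := cK K.-1 (ltnSn _).
exists g => //; rewrite (mdivb_mdeg_eq gc); last by rewrite Gd // mdeg3 /c; mnm3_simpl; lia.
by apply: mnm3_eq; rewrite /c; mnm3_simpl; lia.
Qed.

Definition lex_maximal (G : seq mon) (u : mon) :=
  forall g, g \in G -> g p < u p \/ g p = u p /\ g q <= u q.

Definition exchange_closed (G : seq mon) (u : mon) := forall v w, v \in G -> w \in G ->
  (v + U_(p) = u + U_(q))%MM -> (w + U_(q) = u + U_(r))%MM ->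
  exists2 m, m \in G & (m + U_(p) = u + U_(r))%MM.

Definition lex_descent (l s : 'I_3) := [\/ l = q /\ s = p, l = r /\ s = p | l = r /\ s = q].

Lemma lex_maximal_step (u w : mon) l s : l != s -> (w + U_(s) = u + U_(l))%MM ->
  w p < u p \/ w p = u p /\ w q <= u q -> lex_descent l s.
Proof.
move=> + + lex; case: (ord3_cases l) => ->; case: (ord3_cases s) => ->; rewrite ?eqxx // => _ E;
  coords E; by [constructor 1 | constructor 2 | constructor 3 | exfalso; lia].
Qed.

Local Ltac adjacent3 :=
  let step l s := exists l, s; split; [by rewrite ?triple_neq | apply: mnm3_eq; mnm3_simpl; lia] in
  first [step p q | step q p | step q r | step r q | step p r | step r p].

Lemma neighbour_cases (u v w : mon) l1 s1 l2 s2 :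
  (v + U_(s1) = u + U_(l1))%MM -> (w + U_(s2) = u + U_(l2))%MM ->
  lex_descent l1 s1 -> lex_descent l2 s2 ->
  [\/ v = w, adjacent v w, [/\ l1 = q, s1 = p, l2 = r & s2 = q]
    | [/\ l1 = r, s1 = q, l2 = q & s2 = p]].
Proof.
move=> + + D1 D2; case: D1 => -[-> ->]; case: D2 => -[-> ->] => E1 E2;
  try (by constructor 3); try (by constructor 4); coords E1; coords E2;
  first [constructor 1; apply: mnm3_eq; lia | constructor 2; adjacent3].
Qed.

Lemma exchange_adjacent (u v w m b : mon) :
  (v + U_(p) = u + U_(q))%MM -> (w + U_(q) = u + U_(r))%MM -> (m + U_(p) = u + U_(r))%MM ->
  [/\ adjacent v m, adjacent m w, (mdivb v b -> mdivb w b -> mdivb m b) & m != u].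
Proof.
move=> Ev Ew Em; have mu : m != u.
  by apply/eqP => mu; move: Em; rewrite mu => /addmI /mnmP /(_ p); mnm3_simpl.
coords Ev; coords Ew; coords Em; split => //; try adjacent3.
by rewrite !mdivb3 => /and3P [? ? ?] /and3P [? ? ?]; apply/and3P; split; lia.
Qed.

Lemma rem_neighbours_linked (G : seq mon) u b (P : mon -> Prop) :
  uniq G -> lex_maximal G u -> exchange_closed G u ->
  (forall x y, x \in rem u G -> y \in rem u G -> mdivb x b -> mdivb y b ->
     adjacent x y -> P x -> P y) ->
  forall v w, v \in rem u G -> w \in rem u G -> mdivb v b -> mdivb w b ->
    adjacent u v -> adjacent u w -> P v -> P w.
Proof.
move=> uG lexu exu hP v w vR wR vb wb [l1 [s1 [nls1 E1]]] [l2 [s2 [nls2 E2]]] Pv.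
have [vG wG] := (mem_rem vR, mem_rem wR).
have mR m : m \in G -> m != u -> m \in rem u G.
  by move=> mG mu; rewrite mem_rem_uniq // inE mu.
have D1 := lex_maximal_step nls1 E1 (lexu v vG).
have D2 := lex_maximal_step nls2 E2 (lexu w wG).
case: (neighbour_cases E1 E2 D1 D2) => [<- // | avw | [el1 es1 el2 es2] | [el1 es1 el2 es2]];
  rewrite ?el1 ?es1 in E1; rewrite ?el2 ?es2 in E2.
- exact: hP avw Pv.
- have [m mG Em] := exu v w vG wG E1 E2.
  have [avm amw /(_ vb wb) mb mu] := exchange_adjacent b E1 E2 Em.
  have Pm := hP v m vR (mR m mG mu) vb mb avm Pv.
  exact: hP (mR m mG mu) wR mb wb amw Pm.
- have [m mG Em] := exu w v wG vG E2 E1.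
  have [awm amv /(_ wb vb) mb mu] := exchange_adjacent b E2 E1 Em.
  have Pm := hP v m vR (mR m mG mu) vb mb (adjacent_sym amv) Pv.
  exact: hP (mR m mG mu) wR mb wb (adjacent_sym awm) Pm.
Qed.

Lemma connected_rem (G : seq mon) u : uniq G -> lex_maximal G u -> exchange_closed G u ->
  divisor_graph_connected G -> divisor_graph_connected (rem u G).
Proof.
move=> uG lexu exu CG b P [g0 [g0R g0b Pg0]] hP g gR gb.
have memR x : (x \in rem u G) = (x != u) && (x \in G) by rewrite mem_rem_uniq // inE.
pose P' x := if x == u then exists v, [/\ v \in rem u G, mdivb v b, adjacent u v & P v]
             else P x.
move: (gR) (g0R); rewrite !memR => /andP [gu gG] /andP [g0u g0G].
suff : P' g by rewrite /P' (negbTE gu).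
apply: (CG b P') => //; first by exists g0; rewrite /P' (negbTE g0u).
move=> x y xG yG xb yb axy; rewrite /P'.
have [xu | xu] := eqVneq x u; have [yu | yu] := eqVneq y u => //.
- case=> v [vR vb auv Pv]; rewrite xu in axy.
  by apply: (rem_neighbours_linked uG lexu exu hP vR _ vb yb auv axy Pv); rewrite memR yu.
- by move=> Px; exists x; split; rewrite ?memR ?xu // -yu; apply: adjacent_sym.
- by apply: hP; rewrite // memR ?xu ?yu.
Qed.

Lemma betti1_neq0 F (G : seq mon) b : kvalid G b [set p] -> kvalid G b [set q] ->
  ~~ kvalid G b [set p; q] -> ~~ (kvalid G b [set p; r] && kvalid G b [set q; r]) ->
  betti_mdeg F G 1 b != 0.
Proof.
move=> vp vq nvpq nboth.
have C2r S : S \in koszul_cells G b 2 ->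
    kvalid G b [set r] /\ S = if kvalid G b [set q; r] then [set q; r] else [set p; r].
  rewrite inE => /andP [vS /eqP /card2_cases [] SE]; move: vS; rewrite SE.
  - by rewrite (negbTE nvpq).
  - move=> vpr; split; first by apply: kvalidS vpr; rewrite sub1set !inE eqxx orbT.
    by case: ifP => // vqr; move: nboth; rewrite vpr vqr.
  - move=> vqr; split; last by rewrite vqr.
    by apply: kvalidS vqr; rewrite sub1set !inE eqxx orbT.
have := betti1_ge F G b; have := card_kvalid1_le G b.
case vr: (kvalid G b [set r]).
  have -> : [set i | kvalid G b [set i]] = setT.
    by apply/setP => i; rewrite !inE; case: (ord3_cases i) => ->.
  have : #|koszul_cells G b 2| <=
         #|[set if kvalid G b [set q; r] then [set q; r] else [set p; r]]|.
    by apply/subset_leq_card/subsetP => S /C2r [_ ->]; rewrite inE.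
  rewrite cards1 cardsT card_ord; lia.
have : #|[set p; q]| <= #|[set i | kvalid G b [set i]]|.
  by apply/subset_leq_card/subsetP => i; rewrite !inE => /orP [] /eqP ->.
have -> : koszul_cells G b 2 = set0.
  by apply/setP => S; rewrite in_set0; apply/negbTE/negP => /C2r []; rewrite vr.
rewrite cards2 npq cards0; lia.
Qed.

End DistinctTriple.

Lemma ord3_third (j k : 'I_3) : j != k -> exists l, j != l /\ k != l.
Proof.
elim/ord3_ind: j; elim/ord3_ind: k => // _; first [by exists o0 | by exists o1 | by exists o2].
Qed.

Section Betti2.
Local Open Scope ring_scope.

Lemma betti2_neq0 F (G : seq mon) b : (forall l, kvalid G b [set~ l]) ->
  ~~ kvalid G b setT -> betti_mdeg F G 2 b != 0%N.
Proof.
move=> vC1 nvT.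
have v01 : kvalid G b [set o0; o1] by rewrite -(@setC1_pair o0 o1 o2).
have v02 : kvalid G b [set o0; o2] by rewrite -(@setC1_pair o0 o2 o1).
have v12 : kvalid G b [set o1; o2] by rewrite -(@setC1_pair o1 o2 o0).
have cell S : kvalid G b S -> #|S| = 2 -> S \in koszul_cells G b 2.
  by move=> vS cS; rewrite inE vS cS.
pose e S : 'rV[F]_#|{set 'I_3}| := delta_mx 0 (enum_rank S).
apply: (betti2_neq0_of_cycle (x := e [set o0; o1] - e [set o0; o2] + e [set o1; o2])).
- have n02 : ([set o0; o1] == [set o0; o2]) = false.
    by apply/eqP => /setP /(_ o1); rewrite !inE.
  have n12 : ([set o0; o1] == [set o1; o2]) = false.
    by apply/eqP => /setP /(_ o0); rewrite !inE.
  apply/eqP => /rowP /(_ (enum_rank [set o0; o1])); rewrite !mxE !eqxx !(inj_eq enum_rank_inj).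
  by rewrite n02 n12 /= subr0 addr0 => /eqP; rewrite oner_eq0.
- by rewrite /e !mulmxDl !mulNmx !delta_kproj ?cell ?cards2.
- rewrite /e !mulmxDl !mulNmx -!rowE !row_kdiff_pair //.
  by apply/rowP => k; rewrite !mxE; ring.
apply/setP => S; rewrite !inE; apply/negbTE; apply: contra nvT => /andP [vS /eqP cS].
suff <- : S = setT by [].
by apply/eqP; rewrite eqEcard subsetT cardsT card_ord cS.
Qed.

End Betti2.

Lemma linear_resolution_saturated F (G : seq mon) d :
  linear_resolution F G d -> saturated_from G d.
Proof.
move=> LR c dc Hc; apply: contraT => nc.
have : betti_mdeg F G 2 (c + mnm_set setT)%MM != 0.
  by apply: betti2_neq0 => [l|]; rewrite ?kvalid_setC1 ?kvalid_setT.
rewrite LR // mdegD (@mdeg3 o0 o1 o2 isT isT isT (mnm_set setT)) !mnmE !in_setT /=; lia.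
Qed.

Definition kvalid_pair_condition (G : seq mon) d := forall b (j k l : 'I_3),
  j != k -> k != l -> j != l -> d + 2 <= mdeg b ->
  kvalid G b [set j] -> kvalid G b [set k] ->
  kvalid G b [set j; k] \/ kvalid G b [set j; l] /\ kvalid G b [set k; l].

Lemma linear_resolution_kvalid_pairs F (G : seq mon) d :
  linear_resolution F G d -> kvalid_pair_condition G d.
Proof.
move=> LR b j k l njk nkl njl db vj vk.
have [vjk | nvjk] := boolP (kvalid G b [set j; k]); first by left.
have [/andP [vjl vkl] | nboth] := boolP (kvalid G b [set j; l] && kvalid G b [set k; l]).
  by right.
by have := betti1_neq0 njk nkl njl F vj vk nvjk nboth; rewrite LR //; lia.
Qed.

Lemma connected_at_step (G : seq mon) d b : (forall g, g \in G -> mdeg g = d) ->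
  kvalid_pair_condition G d -> d + 2 <= mdeg b ->
  (forall j, 0 < b j -> connected_at G (b - U_(j))%MM) -> connected_at G b.
Proof.
move=> Gd KP db IH P [g0 [g0G g0b Pg0]] hP g gG gb.
have face j h : h \in G -> mdivb h b -> h j < b j -> P h ->
    forall g', g' \in G -> mdivb g' b -> g' j < b j -> P g'.
  move=> hG hb hj Ph g' g'G g'b g'j; have bj : 0 < b j by apply: leq_ltn_trans hj.
  apply: (IH j bj P) => //; first by exists h; rewrite mdivb_subU // hb hj.
    by move=> x y xG yG; rewrite !mdivb_subU // => /andP [xb _] /andP [yb _]; apply: hP.
  by rewrite mdivb_subU // g'b g'j.
have [j0 g0j0] : exists j, g0 j < b j by apply: mdivb_mdeg_ltn => //; rewrite Gd //; lia.
have [j gj] : exists j, g j < b j by apply: mdivb_mdeg_ltn => //; rewrite Gd //; lia.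
have Pj0 := face j0 g0 g0G g0b g0j0 Pg0.
have [ej | nj] := eqVneq j0 j; first by apply: (Pj0 g) => //; rewrite ej.
have [l [nj0l njl]] := ord3_third nj.
have vj0 : kvalid G b [set j0] by apply/kvalid1P; exists g0; rewrite ?g0b.
have vj : kvalid G b [set j] by apply/kvalid1P; exists g; rewrite ?gb.
case: (KP b j0 j l nj njl nj0l db vj0 vj) =>
  [/kvalid2_exists [h hG /and3P [hb hj0 hj]] | []].
  exact: face j h hG hb hj (Pj0 h hG hb hj0) g gG gb gj.
move=> /kvalid2_exists [h1 h1G /and3P [h1b h1j0 h1l]].
move=> /kvalid2_exists [h2 h2G /and3P [h2b h2j h2l]].
have Ph2 := face l h1 h1G h1b h1l (Pj0 h1 h1G h1b h1j0) h2 h2G h2b h2l.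
exact: face j h2 h2G h2b h2j Ph2 g gG gb gj.
Qed.

Lemma connected_of_kvalid_pairs (G : seq mon) d : (forall g, g \in G -> mdeg g = d) ->
  kvalid_pair_condition G d -> divisor_graph_connected G.
Proof.
move=> Gd KP b; have [k] := ubnP (mdeg b); elim: k b => // k IH b /ltnSE bk.
have [small | big] := leqP (mdeg b) d.+1; first exact: connected_at_small Gd small.
apply: connected_at_step Gd KP _ _ => [| j bj]; first lia.
by apply: IH; rewrite -ltnS mdeg_subU.
Qed.

Lemma exists_lex_max (T : eqType) (f1 f2 : T -> nat) (s : seq T) : s != [::] ->
  exists2 u, u \in s & forall g, g \in s -> f1 g < f1 u \/ f1 g = f1 u /\ f2 g <= f2 u.
Proof.
elim: s => // x s IH _; have [-> | /IH [u us Hu]] := eqVneq s [::].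
  by exists x; rewrite ?inE // => g; rewrite inE => /eqP ->; right.
have [xu | ux] := boolP ((f1 x < f1 u) || (f1 x == f1 u) && (f2 x <= f2 u)).
  exists u; first by rewrite inE us orbT.
  by move=> g; rewrite inE => /orP [/eqP -> | /Hu //]; move: xu; lia.
exists x; first by rewrite inE eqxx.
by move=> g; rewrite inE => /orP [/eqP -> | /Hu]; [right | move: ux; lia].
Qed.

Definition removal_invariant d (G : seq mon) :=
  [/\ forall g, g \in G -> mdeg g = d, divisor_graph_connected G & saturated_from G d].

Lemma removal_invariant_rem d (G : seq mon) u (p q r : 'I_3) :
  p != q -> q != r -> p != r -> uniq G -> u \in G -> removal_invariant d G ->
  lex_maximal p q G u -> exchange_closed p q r G u ->
  removal_invariant d (rem u G) /\ mon_colon_by_vars (rem u G) u.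
Proof.
move=> npq nqr npr uG uin [Gd CG satG] lexu exu.
split; last exact: connected_colon_by_vars.
split; [by move=> g /mem_rem; apply: Gd | exact: (connected_rem npq nqr npr) |].
by apply: (saturated_rem (p := p)) => // g /lexu; lia.
Qed.

Lemma removal_step d (G : seq mon) : uniq G -> removal_invariant d G -> G != [::] ->
  exists2 u, u \in G & removal_invariant d (rem u G) /\ mon_colon_by_vars (rem u G) u.
Proof.
move=> uG inv GN; have [Gd _ satG] := inv.
(* u is lexicographically largest for the exponents of (x, y), u' for those of (x, z).
   A generator a' = u' z / x makes u exchange closed, by saturation; if there is none,
   the exchange property of u' for the order (x, z, y) holds vacuously. *)
have [u uin lexu] := exists_lex_max (fun g : mon => g o0) (fun g => g o1) GN.
have [u' u'in lexu'] := exists_lex_max (fun g : mon => g o0) (fun g => g o2) GN.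
have e0 : u' o0 = u o0 by have := lexu u' u'in; have := lexu' u uin; lia.
have e1 : u' o1 <= u o1 by have := lexu u' u'in; lia.
case: (boolP (has (fun a => (a + U_(o0) == u' + U_(o2))%MM) G)) =>
  [/hasP [a' a'G /eqP Ea'] | /hasPn noa].
  exists u => //; apply: (@removal_invariant_rem _ _ _ o0 o1 o2) => // a c aG _ Ea _.
  move: (congr1 (fun m : mon => m o0) Ea') (congr1 (fun m : mon => m o1) Ea').
  rewrite /= !mnmDE !mnm1E /= => Ea'0 Ea'1.
  by apply: (@saturated_exchange o0 o1 o2 isT isT isT _ _ _ _ _ Gd satG uin aG a'G Ea); lia.
exists u' => //; apply: (@removal_invariant_rem _ _ _ o0 o2 o1) => // v w vG _ Ev _.
by move: (noa v vG); rewrite Ev eqxx.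
Qed.

Theorem mainTheorem2 (F : fieldType) (d : nat) (G : seq 'X_{1..3}) :
  uniq G ->
  (forall g, g \in G -> mdeg g = d) ->
  linear_resolution F G d ->
  exists ms : seq 'X_{1..3}, perm_eq ms G /\ linear_quotients F ms.
Proof.
move=> uG Gd LR.
have inv : removal_invariant d G.
  split => //; last exact: linear_resolution_saturated LR.
  exact: connected_of_kvalid_pairs Gd (linear_resolution_kvalid_pairs LR).
have [ms pms lq] := mon_linear_quotients_by_removal (@removal_step d) uG inv.
by exists ms; split => //; apply: linear_quotients_mon.
Qed.
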